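(* Assume there exist $\gamma\in\mathcal{KL}$ and $\psi:\mathbb R^d\to\mathbb R_+$ with $\overline\psi:=\sup_{x\in X^{\rm in}}\psi(x)\in(0,+\infty)$ such that $\varphi(T^k(x))\le\gamma(\psi(x),k)$ for all $x\in X^{\rm in}$ and all $k\in\mathbb N$. Then: (1) $\limsup_{n\to\infty}\nu_n\le 0$, and if moreover there exist $k\in\mathbb N$ and $x\in X^{\rm in}$ with $\varphi(T^k(x))>0$, then $G^{>}_\nu\neq\emptyset$; (2) there exists $h\in\mathcal K_\infty$ (extended to a function on $\mathbb R$) such that $\nu_k\le h(e^{-k})$ for all $k\in\mathbb N$, i.e. $(h,e^{-1})\in\Gamma(\nu)$, and if moreover there exist $k\in\mathbb N$, $x\in X^{\rm in}$ with $\varphi(T^k(x))>0$, then $\mathcal S(\nu,h)=\{k:\nu_k>h(0)\}\neq\emptyset$.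
   Context: Standing data: a nonempty set $X^{\rm in}\subseteq\mathbb R^d$, a map $T:\mathbb R^d\to\mathbb R^d$ ($T^k$ its $k$-fold composition, $T^0=\mathrm{Id}$), and $\varphi:\mathbb R^d\to\mathbb R$ with $\varphi(0)=0$; $\nu_k=\sup_{x\in X^{\rm in}}\varphi(T^k(x))$, assumed finite for every $k$. $G^{>}_\nu=\{k:\nu_k>\limsup_n\nu_n\}$. $\mathcal K$: continuous strictly increasing $\alpha:\mathbb R_+\to\mathbb R_+$ with $\alpha(0)=0$; $\mathcal K_\infty$: those in $\mathcal K$ with $\alpha(x)\to+\infty$. $\mathcal L$: continuous strictly decreasing $\sigma:\mathbb R_+\to\mathbb R_+$ with $\sigma(x)\to0$ as $x\to\infty$. $\mathcal{KL}$: $\gamma:\mathbb R_+\times\mathbb R_+\to\mathbb R_+$ with $\gamma(\cdot,t)\in\mathcal K$ for all $t$ and $\gamma(s,\cdot)\in\mathcal L$ for all $s$. $\Gamma(\nu)=\{(h,\beta):h:\mathbb R\to\mathbb R$ strictly increasing and continuous on $[0,1]$, $\beta\in(0,1)$, $\nu_k\le h(\beta^k)\ \forall k\}$. *)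

From Stdlib Require Import Reals.
From Stdlib Require Fin.
From Coquelicot Require Import Coquelicot.
Open Scope R_scope.

Definition Rd (d : nat) : Type := Fin.t d -> R.
Definition origin (d : nat) : Rd d := fun _ => 0.

Definition iterT {d : nat} (T : Rd d -> Rd d) (k : nat) (x : Rd d) : Rd d :=
  Nat.iter k T x.

Definition cont_on_nonneg (f : R -> R) : Prop :=
  forall x, 0 <= x ->
    filterlim f (within (fun y => 0 <= y) (locally x)) (locally (f x)).

Definition classK (a : R -> R) : Prop :=
  (forall x, 0 <= x -> 0 <= a x) /\
  cont_on_nonneg a /\
  (forall x y, 0 <= x -> x < y -> a x < a y) /\
  a 0 = 0.

Definition classKinf (a : R -> R) : Prop :=
  classK a /\ is_lim a p_infty p_infty.

Definition classL (s : R -> R) : Prop :=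
  (forall x, 0 <= x -> 0 <= s x) /\
  cont_on_nonneg s /\
  (forall x y, 0 <= x -> x < y -> s y < s x) /\
  is_lim s p_infty 0.

Definition classKL (g : R -> R -> R) : Prop :=
  (forall t, 0 <= t -> classK (fun s => g s t)) /\
  (forall s, 0 < s -> classL (fun t => g s t)).

Definition is_nu {d : nat} (Xin : Rd d -> Prop) (T : Rd d -> Rd d)
  (phi : Rd d -> R) (nu : nat -> R) : Prop :=
  forall k, is_lub (fun y => exists x, Xin x /\ y = phi (iterT T k x)) (nu k).

Definition G_gt (nu : nat -> R) : nat -> Prop :=
  fun k => Rbar_lt (LimSup_seq nu) (nu k).

Definition in_Gamma (nu : nat -> R) (h : R -> R) (beta : R) : Prop :=
  (forall x y, 0 <= x -> x < y -> y <= 1 -> h x < h y) /\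
  (forall x, 0 <= x <= 1 ->
     filterlim h (within (fun y => 0 <= y <= 1) (locally x)) (locally (h x))) /\
  0 < beta < 1 /\
  (forall k, nu k <= h (beta ^ k)).

Definition S_set (nu : nat -> R) (h : R -> R) : nat -> Prop :=
  fun k => nu k > h 0.

(* Put g := gamma(psibar, .).  Monotonicity of gamma in its first argument
   gives nu_k <= g(k), and g(k) -> 0, so limsup nu <= 0; a positive value
   phi(T^k x) then makes nu_k > 0 >= limsup nu.  For (2) take
   h(s) := s + g(max(0, -ln s)) for s > 0 and h(s) := 0 otherwise: the term
   s makes h strictly increasing and unbounded, g(-ln s) -> 0 as s -> 0+
   gives continuity at 0, and h(e^-k) = e^-k + g(k) > nu_k. *)

From Stdlib Require Import Reals Lra.
From Coquelicot Require Import Coquelicot.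
Open Scope R_scope.

Lemma classK_le (a : R -> R) x y : classK a -> 0 <= x -> x <= y -> a x <= a y.
Proof.
  intros (_ & _ & a_incr & _) x_ge0 [x_lt_y | <-]; [| lra].
  now left; apply a_incr.
Qed.

Lemma classL_le (s : R -> R) x y : classL s -> 0 <= x -> x <= y -> s y <= s x.
Proof.
  intros (_ & _ & s_decr & _) x_ge0 [x_lt_y | <-]; [| lra].
  now left; apply s_decr.
Qed.

Lemma filterlim_within_sub (f : R -> R) (D E : R -> Prop) x l :
  (forall y, D y -> E y) ->
  filterlim f (within E (locally x)) l -> filterlim f (within D (locally x)) l.
Proof.
  intros DE f_lim P P_l. specialize (f_lim P P_l).
  unfold filtermap, within in *.
  eapply filter_imp; [| exact f_lim]. auto.
Qed.

Lemma classK_in_Gamma (nu : nat -> R) (h : R -> R) (beta : R) :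
  classK h -> 0 < beta < 1 -> (forall k, nu k <= h (beta ^ k)) ->
  in_Gamma nu h beta.
Proof.
  intros (_ & h_cont & h_incr & _) beta01 nu_le.
  split; [| split; [| split]]; auto.
  intros x x01. apply (filterlim_within_sub _ _ (fun y => 0 <= y)).
  - intros y; lra.
  - apply h_cont, x01.
Qed.

Lemma is_nu_ge {d : nat} (Xin : Rd d -> Prop) T phi nu x k :
  is_nu Xin T phi nu -> Xin x -> phi (iterT T k x) <= nu k.
Proof. intros nu_lub Xin_x. apply (nu_lub k). eauto. Qed.

Lemma is_nu_le {d : nat} (Xin : Rd d -> Prop) T phi nu (b : nat -> R) k :
  is_nu Xin T phi nu -> (forall x, Xin x -> phi (iterT T k x) <= b k) ->
  nu k <= b k.
Proof. intros nu_lub phi_le. apply (nu_lub k). intros y (x & Xin_x & ->). auto. Qed.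

Lemma is_nu_pos {d : nat} (Xin : Rd d -> Prop) T phi nu :
  is_nu Xin T phi nu -> (exists k x, Xin x /\ phi (iterT T k x) > 0) ->
  exists k, 0 < nu k.
Proof.
  intros nu_lub (k & x & Xin_x & phi_pos). exists k.
  eapply Rlt_le_trans; [exact phi_pos | now apply (is_nu_ge Xin T phi)].
Qed.

Lemma is_nu_le_gamma_sup {d : nat} (Xin : Rd d -> Prop) T phi nu
    (gamma : R -> R -> R) (psi : Rd d -> R) (psibar : R) :
  is_nu Xin T phi nu ->
  (forall t, 0 <= t -> classK (fun s => gamma s t)) ->
  (forall x, 0 <= psi x) ->
  is_lub (fun y => exists x, Xin x /\ y = psi x) psibar ->
  (forall x k, Xin x -> phi (iterT T k x) <= gamma (psi x) (INR k)) ->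
  forall k, nu k <= gamma psibar (INR k).
Proof.
  intros nu_lub gamma_K psi_ge0 psibar_lub phi_le k.
  apply (is_nu_le Xin T phi nu (fun k => gamma psibar (INR k)) k nu_lub).
  intros x Xin_x. eapply Rle_trans; [now apply phi_le |].
  apply (classK_le (fun s => gamma s (INR k))); [apply gamma_K, pos_INR | apply psi_ge0 |].
  apply (proj1 psibar_lub); eauto.
Qed.

Lemma LimSup_le_0 (u v : nat -> R) :
  (forall k, u k <= v k) -> is_lim_seq v 0 -> Rbar_le (LimSup_seq u) 0.
Proof.
  intros u_le_v v_lim.
  eapply Rbar_le_trans; [apply (LimSup_le u v); exists 0%nat; auto |].
  rewrite (is_LimSup_seq_unique v 0); [apply Rbar_le_refl |].
  now apply is_lim_LimSup_seq.
Qed.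

Lemma G_gt_of_pos (nu : nat -> R) k :
  Rbar_le (LimSup_seq nu) 0 -> 0 < nu k -> G_gt nu k.
Proof.
  unfold G_gt. destruct (LimSup_seq nu); simpl; auto; lra.
Qed.

Lemma continuous_Rmax0 (y : R) : continuous (Rmax 0) y.
Proof.
  apply filterlim_locally. intros eps. exists eps. intros z Hz.
  unfold ball in *; simpl in *; unfold AbsRing_ball, abs, minus, plus, opp in *;
  simpl in *.
  unfold Rmax; destruct (Rle_dec 0 z), (Rle_dec 0 y);
  unfold Rabs in *; repeat destruct Rcase_abs; lra.
Qed.

(* Truncated at 0 so that the argument of g stays in R_+ also for s > 1. *)
Definition ln_inv_pos (s : R) : R := Rmax 0 (- ln s).

Lemma ln_inv_pos_ge0 s : 0 <= ln_inv_pos s.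
Proof. apply Rmax_l. Qed.

Lemma ln_inv_pos_exp (t : R) : 0 <= t -> ln_inv_pos (exp (- t)) = t.
Proof.
  intros t_ge0. unfold ln_inv_pos. rewrite ln_exp, Ropp_involutive.
  now apply Rmax_right.
Qed.

Lemma ln_inv_pos_antimono x y : 0 < x -> x <= y -> ln_inv_pos y <= ln_inv_pos x.
Proof.
  intros x_pos x_le_y. apply Rle_max_compat_l.
  enough (ln x <= ln y) by lra.
  destruct x_le_y as [x_lt_y | <-]; [left; now apply ln_increasing | lra].
Qed.

Lemma continuous_ln_inv_pos x : 0 < x -> continuous ln_inv_pos x.
Proof.
  intros x_pos.
  apply (continuous_comp (fun s => - ln s) (Rmax 0)).
  - now apply (continuous_opp ln), continuous_ln.
  - apply continuous_Rmax0.
Qed.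

Lemma ln_inv_pos_lim_0 :
  filterlim ln_inv_pos (at_right 0) (Rbar_locally p_infty).
Proof.
  intros P [M HM].
  assert (ln_small : at_right 0 (fun s => ln s < - M)).
  { apply (is_lim_ln_0 (fun y => y < - M)). exists (- M). auto. }
  unfold filtermap. eapply filter_imp; [| exact ln_small]. intros s ln_s. apply HM.
  unfold ln_inv_pos. eapply Rlt_le_trans, Rmax_r. lra.
Qed.

Definition kinf_majorant (g : R -> R) (s : R) : R :=
  if Rle_dec s 0 then 0 else s + g (ln_inv_pos s).

Section KinfMajorant.

Variable g : R -> R.
Hypothesis g_ge0 : forall t, 0 <= t -> 0 <= g t.
Hypothesis g_antimono : forall a b, 0 <= a -> a <= b -> g b <= g a.
Hypothesis g_cont : cont_on_nonneg g.
Hypothesis g_lim : is_lim g p_infty 0.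

Let h := kinf_majorant g.

Lemma kinf_majorant_0 : h 0 = 0.
Proof. unfold h, kinf_majorant; destruct Rle_dec; lra. Qed.

Lemma kinf_majorant_pos s : 0 < s -> h s = s + g (ln_inv_pos s).
Proof. intros; unfold h, kinf_majorant; destruct Rle_dec; lra. Qed.

Lemma kinf_majorant_ge_id s : 0 < s -> s <= h s.
Proof.
  intros s_pos. rewrite kinf_majorant_pos by exact s_pos.
  pose proof (g_ge0 _ (ln_inv_pos_ge0 s)). lra.
Qed.

Lemma kinf_majorant_incr x y : 0 <= x -> x < y -> h x < h y.
Proof.
  intros x_ge0 x_lt_y. destruct (Req_dec x 0) as [-> | x_neq0].
  - rewrite kinf_majorant_0. pose proof (kinf_majorant_ge_id y). lra.
  - rewrite !kinf_majorant_pos by lra.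
    pose proof (g_antimono _ _ (ln_inv_pos_ge0 y)
                  (ln_inv_pos_antimono x y ltac:(lra) ltac:(lra))).
    lra.
Qed.

Lemma continuous_kinf_majorant x : 0 < x -> continuous h x.
Proof.
  intros x_pos. unfold continuous. rewrite kinf_majorant_pos by exact x_pos.
  apply (filterlim_ext_loc (fun s => s + g (ln_inv_pos s))).
  { apply (locally_interval _ x 0 p_infty); simpl; auto.
    intros y y_pos _. now rewrite kinf_majorant_pos. }
  apply (continuous_plus (fun s => s) (fun s => g (ln_inv_pos s)));
    [apply continuous_id |].
  eapply filterlim_comp; [| apply (g_cont _ (ln_inv_pos_ge0 x))].
  intros P P_l. apply (continuous_ln_inv_pos x x_pos) in P_l. unfold filtermap in *.
  eapply filter_imp; [| exact P_l]. intros s Ps. apply Ps, ln_inv_pos_ge0.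
Qed.

Lemma kinf_majorant_lim_0 : filterlim h (at_right 0) (locally 0).
Proof.
  apply (filterlim_ext_loc (fun s => s + g (ln_inv_pos s))).
  { exists (mkposreal 1 Rlt_0_1). intros y _ y_pos. now rewrite kinf_majorant_pos. }
  rewrite <- (Rplus_0_l 0) at 2.
  apply (filterlim_comp_2 (fun s => s) _ Rplus
           (G := locally 0) (H := locally 0)).
  - apply (filterlim_filter_le_1 (F := locally 0));
      [apply filter_le_within | apply filterlim_id].
  - eapply filterlim_comp; [exact ln_inv_pos_lim_0 | exact g_lim].
  - exact (filterlim_plus (V := R_NormedModule) 0 0).
Qed.

Lemma kinf_majorant_cont : cont_on_nonneg h.
Proof.
  intros x x_ge0. destruct (Req_dec x 0) as [-> | x_neq0].
  - rewrite kinf_majorant_0. intros P P_l.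
    destruct (kinf_majorant_lim_0 P P_l) as [eps Heps].
    exists eps. intros y y_near y_ge0.
    destruct (Req_dec y 0) as [-> | y_neq0]; [| apply Heps; auto; lra].
    rewrite kinf_majorant_0. now apply locally_singleton.
  - apply (filterlim_filter_le_1 (F := locally x)); [apply filter_le_within |].
    apply continuous_kinf_majorant. lra.
Qed.

Lemma kinf_majorant_classKinf : classKinf h.
Proof.
  split; [split; [| split; [| split]] |].
  - intros x [x_pos | <-]; [| rewrite kinf_majorant_0; lra].
    left. rewrite <- kinf_majorant_0. now apply kinf_majorant_incr; [lra |].
  - exact kinf_majorant_cont.
  - exact kinf_majorant_incr.
  - exact kinf_majorant_0.
  - intros P [M HM]. exists (Rmax M 0). intros x Hx. apply HM.
    pose proof (Rmax_l M 0). pose proof (Rmax_r M 0).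
    pose proof (kinf_majorant_ge_id x). lra.
Qed.

Lemma kinf_majorant_exp_gt (k : nat) : g (INR k) < h (exp (- INR k)).
Proof.
  rewrite kinf_majorant_pos, ln_inv_pos_exp by (apply exp_pos || apply pos_INR).
  pose proof (exp_pos (- INR k)). lra.
Qed.

End KinfMajorant.

Lemma exp_neg_pow (k : nat) : exp (-1) ^ k = exp (- INR k).
Proof.
  induction k as [| k IHk]; [simpl; now rewrite Ropp_0, exp_0 |].
  rewrite S_INR. simpl. rewrite IHk, <- exp_plus. f_equal; lra.
Qed.

Theorem mainTheorem9 (d : nat) (Xin : Rd d -> Prop) (T : Rd d -> Rd d)
  (phi : Rd d -> R) (nu : nat -> R)
  (HXin : exists x, Xin x)
  (Hphi0 : phi (origin d) = 0)
  (Hnu : is_nu Xin T phi nu)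
  (gamma : R -> R -> R) (psi : Rd d -> R) (psibar : R)
  (Hgamma : classKL gamma)
  (Hpsi : forall x, 0 <= psi x)
  (Hpsibar : is_lub (fun y => exists x, Xin x /\ y = psi x) psibar)
  (Hpsibar_pos : 0 < psibar)
  (Hbound : forall x k, Xin x -> phi (iterT T k x) <= gamma (psi x) (INR k)) :
  (Rbar_le (LimSup_seq nu) 0 /\
   ((exists k x, Xin x /\ phi (iterT T k x) > 0) -> exists k, G_gt nu k)) /\
  (exists h : R -> R,
     classKinf h /\
     (forall k, nu k <= h (exp (- INR k))) /\
     in_Gamma nu h (exp (-1)) /\
     ((exists k x, Xin x /\ phi (iterT T k x) > 0) -> exists k, S_set nu h k)).
Proof.
  destruct Hgamma as [gamma_K gamma_L].
  pose (g := fun t => gamma psibar t).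
  assert (g_L : classL g) by exact (gamma_L psibar Hpsibar_pos).
  pose proof g_L as (g_ge0 & g_cont & _ & g_lim).
  pose proof (is_nu_le_gamma_sup Xin T phi nu gamma psi psibar
                Hnu gamma_K Hpsi Hpsibar Hbound) as nu_le_g.
  assert (limsup_le0 : Rbar_le (LimSup_seq nu) 0).
  { apply (LimSup_le_0 _ _ nu_le_g).
    eapply is_lim_comp_seq; [exact g_lim | | apply is_lim_seq_INR].
    exists 0%nat; discriminate. }
  assert (nu_le_h : forall k, nu k <= kinf_majorant g (exp (- INR k))).
  { intros k. left. eapply Rle_lt_trans; [apply nu_le_g | apply kinf_majorant_exp_gt]. }
  pose proof (kinf_majorant_classKinf g g_ge0 (fun a b => classL_le g a b g_L)
                g_cont g_lim) as h_Kinf.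
  split; [split; [exact limsup_le0 |] |].
  - intros (k & nu_k_pos)%(is_nu_pos Xin T phi nu Hnu).
    exists k. now apply G_gt_of_pos.
  - exists (kinf_majorant g).
    split; [exact h_Kinf |]. split; [exact nu_le_h |]. split.
    + apply classK_in_Gamma; [apply h_Kinf | | intros k; rewrite exp_neg_pow; apply nu_le_h].
      split; [apply exp_pos |]. rewrite <- exp_0. apply exp_increasing. lra.
    + intros (k & nu_k_pos)%(is_nu_pos Xin T phi nu Hnu).
      exists k. unfold S_set. now rewrite kinf_majorant_0.
Qed.
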